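(* (Uniqueness of types.) In objective type theory (defined in the context below), if $\Gamma \vdash a \in \sigma$ and $\Gamma \vdash a \in \tau$ are both derivable, then $\sigma \equiv \tau$ (syntactic equality up to $\alpha$-equivalence).
   Context: Objective type theory is the following formal system. It has three judgement forms: $\vdash \Gamma\ \mathrm{Ctxt}$, $\Gamma \vdash \sigma \in \mathrm{Type}$, $\Gamma \vdash a \in \sigma$, where a context is a list $[x_1 \in \sigma_1, \ldots, x_n \in \sigma_n]$ of distinct variables with types. Expressions are considered up to $\alpha$-equivalence (e.g. via de Bruijn indices), and $\equiv$ denotes this syntactic equality; $[t/x]$ denotes capture-avoiding substitution and $[x_1,\ldots,x_n]t$ denotes binding of the $x_i$ in $t$. There is NO definitional (judgemental) equality and no conversion rule. The rules are exactly: $\vdash []\ \mathrm{Ctxt}$; from $\vdash \Gamma\ \mathrm{Ctxt}$, $\Gamma \vdash \sigma \in \mathrm{Type}$ and $x$ fresh infer $\vdash [\Gamma, x \in \sigma]\ \mathrm{Ctxt}$; from $\vdash [\Gamma, x\in\sigma, \Delta]\ \mathrm{Ctxt}$ infer $\Gamma, x \in \sigma, \Delta \vdash x \in \sigma$. $\Pi$-types: from $\Gamma \vdash A \in \mathrm{Type}$ and $\Gamma, x\in A \vdash B \in \mathrm{Type}$ infer $\Gamma \vdash \Pi(A,[x]B) \in \mathrm{Type}$; from $\Gamma, x \in A \vdash t \in B$ infer $\Gamma \vdash \lambda(A,[x]B,[x]t) \in \Pi(A,[x]B)$; from $\Gamma \vdash f \in \Pi(A,[x]B)$ and $\Gamma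 \vdash a \in A$ infer $\Gamma \vdash \mathbf{app}(A,[x]B,f,a) \in B[a/x]$; from $\Gamma, x\in A \vdash t \in B$ and $\Gamma \vdash a \in A$ infer $\Gamma \vdash \mathbf{betaconv}(A,[x]B,a,[x]t) \in \mathbf{app}(A,[x]B,\lambda(A,[x]B,[x]t),a) =_{B[a/x]} t[a/x]$. Identity types: from $\Gamma \vdash a \in A$ and $\Gamma \vdash b \in A$ infer $\Gamma \vdash a =_A b \in \mathrm{Type}$; from $\Gamma \vdash a \in A$ infer $\Gamma \vdash \mathbf{refl}(A,a) \in a =_A a$; from $\Gamma, x\in A, y \in A, u \in x =_A y \vdash P \in \mathrm{Type}$, $\Gamma \vdash p \in a =_A b$ and $\Gamma, x \in A \vdash d \in P[x,x,\mathbf{refl}(A,x)/x,y,u]$ infer $\Gamma \vdash \mathbf{idrec}(A,[x,y,u]P,a,b,p,[x]d) \in P[a,b,p/x,y,u]$; from $\Gamma, x\in A, y \in A, u \in x =_A y \vdash P \in \mathrm{Type}$, $\Gamma \vdash a \in A$ and $\Gamma, x \in A \vdash d \in P[x,x,\mathbf{refl}(A,x)/x,y,u]$ infer $\Gamma \vdash \mathbf{idconv}(A,[x,y,u]P,a,[x]d) \in \mathbf{idrec}(A,[x,y,u]P,a,a,\mathbf{refl}(A,a),[x]d) =_{P[a,a,\mathbf{refl}(A,a)/x,y,u]} d[a/x]$. *)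

(* Syntax of objective type theory with de Bruijn indices,
   so that syntactic equality up to alpha-equivalence is Leibniz equality. *)
From Stdlib Require Import List.
Import ListNotations.

(* Binding conventions (number of variables bound in each argument):
   Pi A [x]B                : B binds 1
   lam A [x]B [x]t          : B, t bind 1
   app A [x]B f a           : B binds 1
   betaconv A [x]B a [x]t   : B, t bind 1
   Id A a b                 : none
   refl A a                 : none
   idrec A [x,y,u]P a b p [x]d : P binds 3 (u = index 0, y = 1, x = 2), d binds 1
   idconv A [x,y,u]P a [x]d    : P binds 3, d binds 1 *)
Inductive term : Type :=
| var : nat -> term
| Pi : term -> term -> term
| lam : term -> term -> term -> term
| app : term -> term -> term -> term -> term
| betaconv : term -> term -> term -> term -> term
| Id : term -> term -> term -> term
| refl : term -> term -> term
| idrec : term -> term -> term -> term -> term -> term -> term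
| idconv : term -> term -> term -> term -> term.

Definition up_ren (r : nat -> nat) : nat -> nat :=
  fun n => match n with 0 => 0 | S m => S (r m) end.

Fixpoint ren (r : nat -> nat) (t : term) : term :=
  match t with
  | var n => var (r n)
  | Pi A B => Pi (ren r A) (ren (up_ren r) B)
  | lam A B u => lam (ren r A) (ren (up_ren r) B) (ren (up_ren r) u)
  | app A B f a => app (ren r A) (ren (up_ren r) B) (ren r f) (ren r a)
  | betaconv A B a u => betaconv (ren r A) (ren (up_ren r) B) (ren r a) (ren (up_ren r) u)
  | Id A a b => Id (ren r A) (ren r a) (ren r b)
  | refl A a => refl (ren r A) (ren r a)
  | idrec A P a b p d =>
      idrec (ren r A) (ren (up_ren (up_ren (up_ren r))) P) (ren r a) (ren r b)
            (ren r p) (ren (up_ren r) d)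
  | idconv A P a d =>
      idconv (ren r A) (ren (up_ren (up_ren (up_ren r))) P) (ren r a) (ren (up_ren r) d)
  end.

Definition up (s : nat -> term) : nat -> term :=
  fun n => match n with 0 => var 0 | S m => ren S (s m) end.

Fixpoint subst (s : nat -> term) (t : term) : term :=
  match t with
  | var n => s n
  | Pi A B => Pi (subst s A) (subst (up s) B)
  | lam A B u => lam (subst s A) (subst (up s) B) (subst (up s) u)
  | app A B f a => app (subst s A) (subst (up s) B) (subst s f) (subst s a)
  | betaconv A B a u => betaconv (subst s A) (subst (up s) B) (subst s a) (subst (up s) u)
  | Id A a b => Id (subst s A) (subst s a) (subst s b)
  | refl A a => refl (subst s A) (subst s a)
  | idrec A P a b p d =>
      idrec (subst s A) (subst (up (up (up s))) P) (subst s a) (subst s b)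
            (subst s p) (subst (up s) d)
  | idconv A P a d =>
      idconv (subst s A) (subst (up (up (up s))) P) (subst s a) (subst (up s) d)
  end.

(* t[a/x] where x is de Bruijn index 0 *)
Definition scons (a : term) (s : nat -> term) : nat -> term :=
  fun n => match n with 0 => a | S m => s m end.
Definition subst1 (t a : term) : term := subst (scons a var) t.

(* P[a,b,p/x,y,u] for P in context Gamma,x,y,u (u = 0, y = 1, x = 2) *)
Definition subst3 (P a b p : term) : term := subst (scons p (scons b (scons a var))) P.

(* P[x,x,refl(A,x)/x,y,u], result in context Gamma, x (x = 0) *)
Definition subst_diag (P A : term) : term :=
  subst (scons (refl (ren S A) (var 0)) (scons (var 0) (scons (var 0) (fun n => var (S n))))) P.

(* Contexts: lists of types, head = last declared variable (de Bruijn 0);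
   each entry is well-formed in the context formed by the entries after it. *)
Definition ctx := list term.

(* The context  Gamma, x:A, y:A, u : x =_A y *)
Definition idctx (G : ctx) (A : term) : ctx :=
  Id (ren S (ren S A)) (var 1) (var 0) :: ren S A :: A :: G.

Inductive ctx_ok : ctx -> Prop :=
| ctx_nil : ctx_ok []
| ctx_ext : forall G s, ctx_ok G -> is_type G s -> ctx_ok (s :: G)

with is_type : ctx -> term -> Prop :=
| ty_Pi : forall G A B, is_type G A -> is_type (A :: G) B -> is_type G (Pi A B)
| ty_Id : forall G A a b, has_type G a A -> has_type G b A -> is_type G (Id A a b)

with has_type : ctx -> term -> term -> Prop :=
| tm_var : forall D s G, ctx_ok (D ++ s :: G) ->
    has_type (D ++ s :: G) (var (length D)) (ren (fun n => S (length D) + n) s)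
| tm_lam : forall G A B t, has_type (A :: G) t B -> has_type G (lam A B t) (Pi A B)
| tm_app : forall G A B f a, has_type G f (Pi A B) -> has_type G a A ->
    has_type G (app A B f a) (subst1 B a)
| tm_betaconv : forall G A B a t, has_type (A :: G) t B -> has_type G a A ->
    has_type G (betaconv A B a t)
      (Id (subst1 B a) (app A B (lam A B t) a) (subst1 t a))
| tm_refl : forall G A a, has_type G a A -> has_type G (refl A a) (Id A a a)
| tm_idrec : forall G A P a b p d,
    is_type (idctx G A) P -> has_type G p (Id A a b) ->
    has_type (A :: G) d (subst_diag P A) ->
    has_type G (idrec A P a b p d) (subst3 P a b p)
| tm_idconv : forall G A P a d,
    is_type (idctx G A) P -> has_type G a A ->
    has_type (A :: G) d (subst_diag P A) ->
    has_type G (idconv A P a d)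
      (Id (subst3 P a a (refl A a)) (idrec A P a a (refl A a) d) (subst1 d a)).

(* Every typing rule other than the variable rule determines the type of its
   conclusion from the syntax of the term, because terms carry all their type
   annotations; the variable rule reads the type off the context at the
   variable's position.  So the type of a term is a partial function of the
   context and the term. *)
From Stdlib Require List.
From Stdlib Require Import PeanoNat.

Definition type_of (G : ctx) (a : term) : option term :=
  match a with
  | var n => option_map (ren (fun m => S n + m)) (List.nth_error G n)
  | Pi _ _ | Id _ _ _ => None
  | lam A B _ => Some (Pi A B)
  | app _ B _ a => Some (subst1 B a)
  | betaconv A B a t => Some (Id (subst1 B a) (app A B (lam A B t) a) (subst1 t a))
  | refl A a => Some (Id A a a)
  | idrec _ P a b p _ => Some (subst3 P a b p)
  | idconv A P a d =>
      Some (Id (subst3 P a a (refl A a)) (idrec A P a a (refl A a) d) (subst1 d a))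
  end.

Lemma nth_error_app_length (A : Type) (D G : list A) (s : A) :
  List.nth_error (D ++ s :: G) (length D) = Some s.
Proof.
  rewrite List.nth_error_app2 by apply le_n.
  now rewrite Nat.sub_diag.
Qed.

Lemma has_type_type_of (G : ctx) (a s : term) :
  has_type G a s -> type_of G a = Some s.
Proof.
  intros Ha; destruct Ha; simpl; try reflexivity.
  now rewrite nth_error_app_length.
Qed.

Theorem lemma2p5 : forall (G : ctx) (a s t : term),
  has_type G a s -> has_type G a t -> s = t.
Proof.
  intros G a s t Hs Ht.
  apply has_type_type_of in Hs, Ht.
  rewrite Hs in Ht.
  now injection Ht.
Qed.
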